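(* In a strongly causal, digitalizable OPT in which every state admits a refinement into pure states, let $\rho\in\mathsf{St}_1(\mathrm{A})$. Let $E^{\rm pur}_{N,M,\varepsilon}(\rho)$ be the set of compression schemes $(\mathcal E,\mathcal D)$ such that $\sup\sum_i p_i\|((\mathcal D\circ\mathcal E)\boxtimes\mathcal I_{\mathrm{C}})\Phi_i-\Phi_i\|_{\rm op}<\varepsilon$, where the supremum runs over all systems $\mathrm{C}$, all dilations $\Omega\in\mathsf{St}_1(\mathrm{A}^{\boxtimes N}\mathrm{C})$ of $\rho^{\boxtimes N}$ and all decompositions $\Omega=\sum_ip_i\Phi_i$ with $p_i\ge0$, $\{p_i\Phi_i\}$ a refinement of $\Omega$ and each $\Phi_i$ a normalized pure state. Define $I^{\rm pur}(\rho):=\lim_{\varepsilon\to0}\limsup_{N\to\infty}\min\{M:E^{\rm pur}_{N,M,\varepsilon}(\rho)\ne\emptyset\}/N$. Then $I(\rho)=I^{\rm pur}(\rho)$.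
   Context: Framework (operational probabilistic theory, OPT): each system $\mathrm{A}$ has states $\mathsf{St}(\mathrm{A})$ (normalized ones $\mathsf{St}_1(\mathrm{A})$), effects $\mathsf{Eff}(\mathrm{A})$, transformations $\mathsf{Tr}(\mathrm{A}\to\mathrm{B})$ (channels $\mathsf{Tr}_1$), sequential ($\circ$) and parallel ($\boxtimes$) composition, pairing $(a|\rho)$. Strong causality: for every test $\{\mathcal A_i\}$ and tests $\{\mathcal B^i_j\}_j$, $\{\mathcal B^i_j\circ\mathcal A_i\}$ is a test; unique deterministic effect $e_{\mathrm{A}}$. Operational norm $\|\delta\|_{\rm op}:=\sup_{a\in\mathsf{Eff}(\mathrm{A})}((2a-e_{\mathrm{A}})|\delta)$. A refinement of a state $\Omega$ is a collection of states $\{\Psi_i\}$ contained in a preparation test with $\sum_i\Psi_i=\Omega$; a refinement is trivial if each element is $\lambda_i\Omega$, $\lambda_i\in[0,1]$; a state is pure if it has only trivial refinements. A dilation of $\rho\in\mathsf{St}(\mathrm{A})$ is $\Psi\in\mathsf{St}(\mathrm{A}\mathrm{C})$ with $(\mathcal I_{\mathrm{A}}\boxtimes e_{\mathrm{C}})\Psi=\rho$. Digitalizability: there is an obit system $\mathrm{O}$ such that every system $\mathrm{X}$ can be perfectly (invertibly, via channels) encoded into $\mathrm{O}^{\boxtimes k}$ for some finite $k$. Information content: compression scheme $\mathcal E\in\mathsf{Tr}_1(\mathrm{A}^{\boxtimes N}\to\mathrm{O}^{\boxtimes M})$, $\mathcal D\in\mathsf{Tr}_1(\mathrm{O}^{\boxtimes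 M}\to\mathrm{A}^{\boxtimes N})$; $E_{N,M,\varepsilon}(\rho)$ is the set of schemes with $\sup_{\mathrm{C},\{\Psi_i\}}\sum_i\|((\mathcal D\circ\mathcal E)\boxtimes\mathcal I_{\mathrm{C}})\Psi_i-\Psi_i\|_{\rm op}<\varepsilon$, over all systems $\mathrm{C}$ and refinements $\{\Psi_i\}\subseteq\mathsf{St}(\mathrm{A}^{\boxtimes N}\mathrm{C})$ of dilations of $\rho^{\boxtimes N}$; $I(\rho):=\lim_{\varepsilon\to0}\limsup_{N\to\infty}\min\{M:E_{N,M,\varepsilon}(\rho)\ne\emptyset\}/N$. *)

From HB Require Import structures.
From mathcomp Require Import all_boot all_order all_algebra.
From mathcomp Require Import all_classical all_reals all_analysis.
Set Implicit Arguments.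
Unset Strict Implicit.
Unset Printing Implicit Defensive.
Import Order.TTheory GRing.Theory Num.Theory.
Local Open Scope ring_scope.
Local Open Scope classical_set_scope.

(* Systems form a (strict) monoid under parallel composition with unit the   *)
(* trivial system [I].  For every pair of systems, [tr A B] is the real span *)
(* of the transformations A -> B (the usual linear extension of the set of  *)
(* events); the physical transformations are the elements of tests.  States *)
(* are transformations I -> A, effects A -> I, and [tr I I] is identified   *)
(* with the reals via [prob] (so the pairing (a|rho) is prob (comp a rho)). *)
Record OPT (R : realType) := MkOPT {
  sys : Type;
  I : sys;
  tens : sys -> sys -> sys;
  tensA : forall A B C, tens A (tens B C) = tens (tens A B) C;
  tens1s : forall A, tens I A = A;
  tenss1 : forall A, tens A I = A;
  tr : sys -> sys -> lmodType R;
  comp : forall A B C, tr B C -> tr A B -> tr A C;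
  idt : forall A, tr A A;
  par : forall A B C D, tr A B -> tr C D -> tr (tens A C) (tens B D);
  prob : tr I I -> R;
  test : forall A B, seq (tr A B) -> Prop;
  compA : forall A B C D (h : tr C D) (g : tr B C) (f : tr A B),
      comp h (comp g f) = comp (comp h g) f;
  comp1f : forall A B (f : tr A B), comp (idt B) f = f;
  compf1 : forall A B (f : tr A B), comp f (idt A) = f;
  comp_linl : forall A B C (a : R) (g g' : tr B C) (f : tr A B),
      comp (a *: g + g') f = a *: comp g f + comp g' f;
  comp_linr : forall A B C (a : R) (g : tr B C) (f f' : tr A B),
      comp g (a *: f + f') = a *: comp g f + comp g f';
  par_linl : forall A B C D (a : R) (f f' : tr A B) (g : tr C D),
      par (a *: f + f') g = a *: par f g + par f' g;
  par_linr : forall A B C D (a : R) (f : tr A B) (g g' : tr C D),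
      par f (a *: g + g') = a *: par f g + par f g';
  par_comp : forall A B C A' B' C' (g : tr B C) (f : tr A B)
      (g' : tr B' C') (f' : tr A' B'),
      comp (par g g') (par f f') = par (comp g f) (comp g' f');
  par_id : forall A B, par (idt A) (idt B) = idt (tens A B);
  par_assoc : forall A B C A' B' C' (f : tr A A') (g : tr B B') (h : tr C C'),
      eq_rect _ (fun X => tr X _) (eq_rect _ (tr _) (par f (par g h)) _
        (tensA A' B' C')) _ (tensA A B C) = par (par f g) h;
  par_scall : forall A B (p : tr I I) (f : tr A B),
      eq_rect _ (fun X => tr X B) (eq_rect _ (tr _) (par p f) _ (tens1s B))
        _ (tens1s A) = prob p *: f;
  par_scalr : forall A B (p : tr I I) (f : tr A B),
      eq_rect _ (fun X => tr X B) (eq_rect _ (tr _) (par f p) _ (tenss1 B))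
        _ (tenss1 A) = prob p *: f;
  prob_lin : forall (a : R) (p q : tr I I), prob (a *: p + q) = a * prob p + prob q;
  prob_inj : injective prob;
  prob_id : prob (idt I) = 1;
  prob_comp : forall p q : tr I I, prob (comp p q) = prob p * prob q;
  test_perm : forall A B (s t : seq (tr A B)), perm_eq s t -> test s -> test t;
  test_coarse : forall A B (f g : tr A B) s, test (f :: g :: s) -> test (f + g :: s);
  test_id : forall A, test [:: idt A];
  test_seq : forall A B C (s : seq (tr A B)) (t : seq (tr B C)),
      test s -> test t -> test [seq comp g f | f <- s, g <- t];
  test_par : forall A B C D (s : seq (tr A B)) (t : seq (tr C D)),
      test s -> test t -> test [seq par f g | f <- s, g <- t];
  test_trivial : forall s : seq (tr I I), test s ->
      (forall p, p \in s -> 0 <= prob p) /\ \sum_(p <- s) prob p = 1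
}.

Arguments I {R}.
Arguments tens {R T} : rename.
Arguments tr {R}.
Arguments comp {R T A B C} : rename.
Arguments idt {R T} A : rename.
Arguments par {R T A B C D} : rename.
Arguments prob {R T} : rename.
Arguments test {R T A B} : rename.

Section OPTdefs.
Variables (R : realType) (T : OPT R).
Local Notation sys := (sys T).
Local Notation tr := (@tr R T).
Local Notation I := (I T).

Definition castTr (A A' B B' : sys) (e1 : A = A') (e2 : B = B') (f : tr A B)
  : tr A' B' := match e1, e2 with erefl, erefl => f end.

Definition event (A B : sys) (f : tr A B) : Prop :=
  exists s, test s /\ f \in s.
Definition is_state (A : sys) (rho : tr I A) : Prop := event rho.
Definition is_effect (A : sys) (a : tr A I) : Prop := event a.
Definition deterministic (A B : sys) (f : tr A B) : Prop := test [:: f].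
Definition normalized_state (A : sys) (rho : tr I A) : Prop := deterministic rho.
Definition channel (A B : sys) (f : tr A B) : Prop := deterministic f.

Definition pairing (A : sys) (a : tr A I) (rho : tr I A) : R := prob (comp a rho).

(* refinement of a state: a collection (with multiplicities) contained in a
   preparation test, summing to the state *)
Definition refinement (A : sys) (Om : tr I A) (s : seq (tr I A)) : Prop :=
  (exists u, test (s ++ u)) /\ \sum_(x <- s) x = Om.

Definition pure (A : sys) (Om : tr I A) : Prop :=
  is_state Om /\
  forall s, refinement Om s -> forall x, x \in s ->
    exists lam : R, 0 <= lam <= 1 /\ x = lam *: Om.

Fixpoint spow (A : sys) (n : nat) : sys :=
  match n with 0 => I | n'.+1 => tens (spow A n') A end.
Fixpoint stpow (A : sys) (rho : tr I A) (n : nat) : tr I (spow A n) :=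
  match n return tr I (spow A n) with
  | 0 => idt I
  | n'.+1 => castTr (@tens1s R T I) (erefl _) (par (stpow rho n') rho)
  end.
End OPTdefs.

Arguments castTr {R T A A' B B'}.

Section OPTdefs2.
Variables (R : realType) (T : OPT R).
Local Notation sys := (sys T).
Local Notation tr := (@tr R T).
Local Notation I := (I T).

(* Causality: [e] is the unique deterministic effect on every system. *)
Definition deterministic_effect (e : forall A : sys, tr A I) : Prop :=
  forall A, deterministic (e A) /\ forall a : tr A I, deterministic a -> a = e A.

Definition strongly_causal : Prop :=
  forall (A B C : sys) (s : seq (tr A B)) (F : nat -> seq (tr B C)),
    test s -> (forall i, (i < size s)%N -> test (F i)) ->
    test (flatten [seq [seq comp g (nth 0 s i) | g <- F i] | i <- iota 0 (size s)]).

(* In a causal OPT every state is proportional to a normalized state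
   (standard normalization property of causal theories) *)
Definition normalization_property (e : forall A : sys, tr A I) : Prop :=
  forall (A : sys) (rho : tr I A), is_state rho ->
    exists rhobar : tr I A, normalized_state rhobar /\
      rho = pairing (e A) rho *: rhobar.

Definition digitalizable (O : sys) : Prop :=
  forall X : sys, exists k : nat, exists (Enc : tr X (spow O k)) (Dec : tr (spow O k) X),
    channel Enc /\ channel Dec /\ comp Dec Enc = idt X.

Definition pure_refinable : Prop :=
  forall (A : sys) (Om : tr I A), is_state Om ->
    exists s, refinement Om s /\ forall x, x \in s -> pure x.

Variable e : forall A : sys, tr A I.

Definition op_norm (A : sys) (delta : tr I A) : \bar R :=
  ereal_sup [set (prob (comp (2%:R *: a - e A) delta))%:E | a in [set a | is_effect a]].

Definition dilation (A C : sys) (rho : tr I A) (Psi : tr I (tens A C)) : Prop :=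
  is_state Psi /\
  castTr (erefl I) (@tenss1 R T A) (comp (par (idt A) (e C)) Psi) = rho.

Definition cerr (X Y C : sys) (Enc : tr X Y) (Dec : tr Y X) (Psi : tr I (tens X C)) : \bar R :=
  op_norm (comp (par (comp Dec Enc) (idt C)) Psi - Psi).

Definition Eerrs (O A : sys) (rho : tr I A) (N M : nat)
    (Enc : tr (spow A N) (spow O M)) (Dec : tr (spow O M) (spow A N)) : set (\bar R) :=
  [set x | exists (C : sys) (Psi : tr I (tens (spow A N) C)) s,
        dilation (stpow rho N) Psi /\ refinement Psi s /\
        x = (\sum_(Psi_i <- s) cerr Enc Dec Psi_i)%E].

Definition Eset (O A : sys) (rho : tr I A) (N M : nat) (eps : R) :
    set (tr (spow A N) (spow O M) * tr (spow O M) (spow A N)) :=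
  [set ED | channel ED.1 /\ channel ED.2 /\
    (ereal_sup (Eerrs rho ED.1 ED.2) < eps%:E)%E].

Definition Epurerrs (O A : sys) (rho : tr I A) (N M : nat)
    (Enc : tr (spow A N) (spow O M)) (Dec : tr (spow O M) (spow A N)) : set (\bar R) :=
  [set x | exists (C : sys) (Om : tr I (tens (spow A N) C))
        (d : seq (R * tr I (tens (spow A N) C))),
        normalized_state Om /\ dilation (stpow rho N) Om /\
        (forall pPhi, pPhi \in d -> 0 <= pPhi.1 /\
            normalized_state pPhi.2 /\ pure pPhi.2) /\
        refinement Om [seq pPhi.1 *: pPhi.2 | pPhi <- d] /\
        x = (\sum_(pPhi <- d) ((pPhi.1)%:E * cerr Enc Dec pPhi.2))%E].

Definition Epurset (O A : sys) (rho : tr I A) (N M : nat) (eps : R) :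
    set (tr (spow A N) (spow O M) * tr (spow O M) (spow A N)) :=
  [set ED | channel ED.1 /\ channel ED.2 /\
    (ereal_sup (Epurerrs rho ED.1 ED.2) < eps%:E)%E].

Definition min_rate (P : nat -> Prop) (N : nat) : \bar R :=
  (ereal_inf [set (M%:R)%:E | M in P] * (N%:R^-1)%:E)%E.

Definition info_content (O A : sys) (rho : tr I A) : \bar R :=
  lim ((fun eps : R => limn_esup (fun N =>
          min_rate (fun M => @Eset O A rho N M eps !=set0) N)) @ 0^'+).

Definition info_content_pur (O A : sys) (rho : tr I A) : \bar R :=
  lim ((fun eps : R => limn_esup (fun N =>
          min_rate (fun M => @Epurset O A rho N M eps !=set0) N)) @ 0^'+).
End OPTdefs2.

From Pilot Require Import Defs.
From HB Require Import structures.
From mathcomp Require Import all_boot all_order all_algebra.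
From mathcomp Require Import all_classical all_reals all_analysis.
Set Implicit Arguments.
Unset Strict Implicit.
Unset Printing Implicit Defensive.
Import Order.TTheory GRing.Theory Num.Theory.
Local Open Scope ring_scope.

(* The compression error is a sum of operational norms, which is positively
   homogeneous and subadditive.  Hence the sup over pure decompositions is
   at most the sup over arbitrary refinements (rescale each p_i Phi_i), and
   conversely every refinement {Psi_i} of a dilation can be refined further
   into pure states: refine the normalized Psi_i into pure states and use
   strong causality (conditioning each outcome of the preparation test on
   the deterministic effect) to glue these refinements into one refinement
   of the dilation, whose error dominates sum_i cerr(Psi_i) by subadditivity.
   So the two error sets have the same sup, hence E_{N,M,eps} = E^pur_{N,M,eps}
   and the two information contents coincide. *)

Local Notation comp := Defs.comp.
Local Notation prob := Defs.prob.
Local Notation test := Defs.test.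
Local Notation par := Defs.par.
Local Notation idt := Defs.idt.

HB.instance Definition _ (R : realType) (T : OPT R) (A B C : sys T)
    (g : tr T B C) :=
  GRing.isLinear.Build R (tr T A B) (tr T A C) _ (@comp R T A B C g)
    (fun a => @comp_linr R T A B C a g).

HB.instance Definition _ (R : realType) (T : OPT R) :=
  GRing.isLinear.Build R (tr T (I T) (I T)) R _ (@prob R T) (@prob_lin R T).

Lemma perm_flatten_map_cat (U : eqType) (J : Type) (s : seq J) (f g : J -> seq U) :
  perm_eq (flatten [seq f x ++ g x | x <- s])
          (flatten [seq f x | x <- s] ++ flatten [seq g x | x <- s]).
Proof.
elim: s => [|x s IH] //=.
by rewrite -!catA perm_cat2l perm_sym perm_catCA perm_cat2l perm_sym.
Qed.

Lemma choice_on (X Y : Type) (y0 : Y) (P : X -> Prop) (Q : X -> Y -> Prop) :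
  (forall x, P x -> exists y, Q x y) -> exists f, forall x, P x -> Q x (f x).
Proof.
move=> hPQ; have hx x : exists y, P x -> Q x y.
  by case: (pselect (P x)) => [/hPQ [y hy]|nPx]; [exists y | exists y0].
by have [f hf] := boolp.choice hx; exists f.
Qed.

Section Causal.
Variables (R : realType) (T : OPT R) (e : forall A : sys T, tr T A (I T)).
Local Notation sys := (sys T).
Local Notation tr := (@tr R T).
Local Notation I := (I T).
Hypothesis de : deterministic_effect e.

Lemma comp_scalar (Y : sys) (g : tr I Y) (p : tr I I) : comp g p = prob p *: g.
Proof.
have pE : p = prob p *: idt I by apply: prob_inj; rewrite linearZ /= prob_id mulr1.
by rewrite {1}pE linearZ /= compf1.
Qed.

Lemma deterministic_comp (A B C : sys) (f : tr A B) (g : tr B C) :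
  deterministic f -> deterministic g -> deterministic (comp g f).
Proof. by move=> hf hg; have := test_seq hf hg. Qed.

Lemma deterministic_par (A B C D : sys) (f : tr A B) (g : tr C D) :
  deterministic f -> deterministic g -> deterministic (par f g).
Proof. by move=> hf hg; have := test_par hf hg. Qed.

Lemma deterministic_castTr (Y Z B : sys) (eq : Y = Z) (f : tr Y B) :
  deterministic f -> deterministic (castTr eq (erefl B) f).
Proof. by case: Z / eq. Qed.

Lemma deterministic_e (A : sys) : deterministic (e A).
Proof. by case: (de A). Qed.

Lemma e_effect (A : sys) : is_effect (e A).
Proof. by exists [:: e A]; split; [exact: deterministic_e | rewrite mem_seq1]. Qed.

Lemma normalized_state_is_state (Z : sys) (x : tr I Z) :
  normalized_state x -> is_state x.
Proof. by move=> hx; exists [:: x]; split; [exact: hx | rewrite mem_seq1]. Qed.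

Lemma prob_deterministic (p : tr I I) : deterministic p -> prob p = 1.
Proof. by move=> /test_trivial [_]; rewrite big_seq1. Qed.

Lemma pairing_ge0 (X : sys) (x : tr I X) : is_state x -> 0 <= pairing (e X) x.
Proof.
case=> tau [htau hx]; have /test_trivial [+ _] := test_seq htau (deterministic_e X).
by apply; apply/allpairsP; exists (x, e X); rewrite mem_seq1.
Qed.

Lemma pairing_normalized (X : sys) (x : tr I X) :
  normalized_state x -> pairing (e X) x = 1.
Proof. by move=> hx; apply/prob_deterministic/deterministic_comp/deterministic_e. Qed.

Lemma stpow_normalized (A : sys) (rho : tr I A) n :
  normalized_state rho -> normalized_state (stpow rho n).
Proof.
move=> hrho; elim: n => [|n IH] /=; first exact: test_id.
exact/deterministic_castTr/deterministic_par.
Qed.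

Lemma comp_e_castTr (Y Z : sys) (eq : Y = Z) (g : tr I Y) :
  comp (e Z) (castTr (erefl I) eq g) = comp (e Y) g.
Proof. by case: Z / eq. Qed.

Lemma pairing_dilation (X C : sys) (sigma : tr I X) (Psi : tr I (tens X C)) :
  dilation e sigma Psi -> pairing (e (tens X C)) Psi = pairing (e X) sigma.
Proof.
case=> _ <-.
have -> : e (tens X C) = comp (e (tens X I)) (par (idt X) (e C)).
  case: (de (tens X C)) => _ e_uniq; symmetry; apply: e_uniq.
  by apply/deterministic_comp/deterministic_e/deterministic_par/deterministic_e;
    exact: test_id.
by rewrite /pairing comp_e_castTr Defs.compA.
Qed.

Hypothesis np : normalization_property e.

Lemma dilation_normalized (X C : sys) (sigma : tr I X) (Psi : tr I (tens X C)) :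
  normalized_state sigma -> dilation e sigma Psi -> normalized_state Psi.
Proof.
move=> hsigma hdil; have [Psib [hPsib ->]] := np hdil.1.
by rewrite (pairing_dilation hdil) (pairing_normalized hsigma) scale1r.
Qed.

Lemma normalization_fun (Z : sys) : exists nrm : tr I Z -> tr I Z,
  forall y, is_state y -> normalized_state (nrm y) /\ y = pairing (e Z) y *: nrm y.
Proof. exact: (choice_on 0 (@np Z)). Qed.

End Causal.

Section StrongCausality.
Variables (R : realType) (T : OPT R) (e : forall A : sys T, tr T A (I T)).
Local Notation sys := (sys T).
Local Notation tr := (@tr R T).
Local Notation I := (I T).
Hypothesis de : deterministic_effect e.
Hypothesis sc : strongly_causal T.

(* Strong causality: discard the output of tau with e and, conditioned on the
   outcome x, prepare by sig x; the weights (e|x) are the outcome probabilities. *)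
Lemma test_conditioned (X Y : sys) (tau : seq (tr I X))
    (sig : tr I X -> seq (tr I Y)) :
  test tau -> (forall x, x \in tau -> test (sig x)) ->
  test (flatten [seq [seq pairing (e X) x *: g | g <- sig x] | x <- tau]).
Proof.
move=> htau hsig.
have := @sc I X Y tau (fun i => [seq comp g (e X) | g <- sig (nth 0 tau i)]) htau.
have -> : flatten [seq [seq pairing (e X) x *: g | g <- sig x] | x <- tau] =
  flatten [seq [seq comp g (nth 0 tau i) | g <- [seq comp g (e X) | g <- sig (nth 0 tau i)]]
          | i <- iota 0 (size tau)].
  rewrite -{1}(mkseq_nth 0 tau) /mkseq -map_comp; congr flatten; apply: eq_map => i /=.
  by rewrite -map_comp; apply: eq_map => g /=; rewrite -Defs.compA comp_scalar.
apply=> i hi; have := test_seq (deterministic_e de X) (hsig _ (mem_nth 0 hi)).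
by rewrite /= cats0.
Qed.

(* A refinement {x} of Phib yields, by conditioning tau, the refinement {r x}
   of Phi = r Phib; purity of Phi then forces r x = lam Phi = lam r Phib. *)
Lemma pure_normalized_scale (X : sys) (tau : seq (tr I X)) (Phi Phib : tr I X) r :
  test tau -> Phi \in tau -> pure Phi -> normalized_state Phib ->
  Phi = r *: Phib -> r != 0 -> pure Phib.
Proof.
move=> htau hPhi [_ Phi_pure] hPhib PhiE r_neq0.
split; first exact: normalized_state_is_state.
move=> s [[w hsw] hsum] x hx.
have hr : pairing (e X) Phi = r.
  by rewrite PhiE /pairing linearZ /= linearZ /= -/(pairing _ _)
    (pairing_normalized de hPhib) mulr1.
pose F (y : tr I X) := [seq pairing (e X) y *: g | g <- s ++ w].
have href : refinement Phi [seq r *: g | g <- s].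
  split; last by rewrite big_map -scaler_sumr hsum PhiE.
  exists ([seq r *: g | g <- w] ++ flatten [seq F y | y <- rem Phi tau]).
  apply: test_perm (test_conditioned (sig := fun=> s ++ w) htau (fun _ _ => hsw)).
  have := perm_flatten (perm_map F (perm_to_rem hPhi)).
  by rewrite /= /F map_cat hr -catA.
have [lam [hlam rxE]] := Phi_pure _ href (r *: x) (map_f _ hx).
exists lam; split => //; apply: (scalerI r_neq0).
by rewrite rxE PhiE !scalerA mulrC.
Qed.

Lemma refinement_flatten (Z : sys) (Psi : tr I Z) (s : seq (tr I Z))
    (t : tr I Z -> seq (tr I Z)) :
  refinement Psi s ->
  (forall P, is_state P -> exists w, test (t P ++ w)) ->
  (forall P, P \in s -> pairing (e Z) P *: \sum_(y <- t P) y = P) ->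
  refinement Psi (flatten [seq [seq pairing (e Z) P *: y | y <- t P] | P <- s]).
Proof.
move=> [[u hsu] hsum] ht_test htE.
have [w hw] := choice_on [::] ht_test.
have hsu_test P : P \in s ++ u -> test (t P ++ w P).
  by move=> hP; apply: hw; exists (s ++ u).
split; last first.
  rewrite big_flatten /= -hsum big_map; apply: eq_big_seq => P hP.
  by rewrite big_map -scaler_sumr htE.
exists (flatten [seq [seq pairing (e Z) P *: y | y <- w P] | P <- s] ++
  flatten [seq [seq pairing (e Z) P *: g | g <- t P ++ w P] | P <- u]).
apply: test_perm (test_conditioned (sig := fun P => t P ++ w P) hsu hsu_test).
rewrite map_cat flatten_cat catA perm_cat2r.
under eq_map do rewrite map_cat.
exact: perm_flatten_map_cat.
Qed.

End StrongCausality.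

Section OpNorm.
Variables (R : realType) (T : OPT R) (e : forall A : sys T, tr T A (I T)).
Local Notation sys := (sys T).
Local Notation tr := (@tr R T).
Local Notation I := (I T).
Hypothesis de : deterministic_effect e.

Lemma op_norm_sum_le (X : sys) (J : Type) (s : seq J) (F : J -> tr I X) :
  (op_norm e (\sum_(j <- s) F j) <= \sum_(j <- s) op_norm e (F j))%E.
Proof.
apply: ge_ereal_sup => _ [a ha <-].
rewrite !linear_sum -sumEFin; apply: lee_sum => j _.
by apply: ereal_sup_ubound; exists a.
Qed.

Lemma op_normZ (X : sys) (p : R) (d : tr I X) : 0 <= p ->
  op_norm e (p *: d) = (p%:E * op_norm e d)%E.
Proof.
move=> hp; rewrite /op_norm -ereal_supZl //; last first.
  by apply/set0P; eexists; exists (e X) => //; exact: (e_effect de).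
congr ereal_sup; rewrite image_comp; apply: eq_imagel => a _ /=.
by rewrite !linearZ.
Qed.

Lemma cerrZ (X Y C : sys) (Enc : tr X Y) (Dec : tr Y X) (Psi : tr I (tens X C)) p :
  0 <= p -> cerr e Enc Dec (p *: Psi) = (p%:E * cerr e Enc Dec Psi)%E.
Proof. by move=> hp; rewrite /cerr linearZ -scalerBr op_normZ. Qed.

Lemma cerr_sum_le (X Y C : sys) (Enc : tr X Y) (Dec : tr Y X) (J : Type)
    (s : seq J) (F : J -> tr I (tens X C)) :
  (cerr e Enc Dec (\sum_(j <- s) F j) <= \sum_(j <- s) cerr e Enc Dec (F j))%E.
Proof. by rewrite /cerr linear_sum -sumrB op_norm_sum_le. Qed.

Lemma cerr_le_decomposition (X Y C : sys) (Enc : tr X Y) (Dec : tr Y X)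
    (P : tr I (tens X C)) (q : R) (D : seq (R * tr I (tens X C))) :
  0 <= q -> (forall pPhi, pPhi \in D -> 0 <= pPhi.1) ->
  q *: \sum_(pPhi <- D) pPhi.1 *: pPhi.2 = P ->
  (cerr e Enc Dec P <= \sum_(pPhi <- D) ((q * pPhi.1)%:E * cerr e Enc Dec pPhi.2))%E.
Proof.
move=> hq hD <-; rewrite scaler_sumr; apply: le_trans (cerr_sum_le _ _ _ _) _.
rewrite big_seq [leRHS]big_seq; apply: lee_sum => pPhi /hD hp.
by rewrite scalerA cerrZ // mulr_ge0.
Qed.

End OpNorm.

Section Compression.
Variables (R : realType) (T : OPT R) (e : forall A : sys T, tr T A (I T)).
Local Notation sys := (sys T).
Local Notation tr := (@tr R T).
Local Notation I := (I T).
Hypothesis de : deterministic_effect e.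
Hypothesis sc : strongly_causal T.
Hypothesis np : normalization_property e.
Hypothesis pr : pure_refinable T.

(* Pure states of vanishing weight are dropped: their normalized versions need
   not be pure. *)
Lemma pure_decomposition (Z : sys) (P : tr I Z) : is_state P ->
  exists D : seq (R * tr I Z),
    [/\ forall pPhi, pPhi \in D ->
          0 <= pPhi.1 /\ normalized_state pPhi.2 /\ pure pPhi.2,
        exists w, test ([seq pPhi.1 *: pPhi.2 | pPhi <- D] ++ w) &
        pairing (e Z) P *: \sum_(pPhi <- D) pPhi.1 *: pPhi.2 = P].
Proof.
move=> hP; have [Pb [hPb PE]] := np hP.
have [t [[[v htv] hsum] t_pure]] := pr (normalized_state_is_state hPb).
have [nrm hnrm] := normalization_fun np Z.
pose nz y := pairing (e Z) y != 0.
have t_state y : y \in t -> is_state y by move=> /t_pure [].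
have hmap : [seq x.1 *: x.2 | x <- [seq (pairing (e Z) y, nrm y) | y <- t & nz y]]
    = [seq y <- t | nz y].
  rewrite -map_comp; apply: map_id_in => y; rewrite mem_filter => /andP [_ /t_state].
  by move=> /hnrm [_ {2}->].
exists [seq (pairing (e Z) y, nrm y) | y <- t & nz y]; split.
- move=> pPhi /mapP [y]; rewrite mem_filter => /andP [y_nz /[dup] yt /t_state ys] -> /=.
  have [hn yE] := hnrm y ys.
  split; first exact: pairing_ge0.
  split=> //; apply: (pure_normalized_scale de sc htv _ (t_pure y yt) hn yE y_nz).
  by rewrite mem_cat yt.
- exists ([seq y <- t | ~~ nz y] ++ v); rewrite hmap catA.
  apply: test_perm htv; rewrite perm_cat2r perm_sym.
  exact: (permEl (perm_filterC nz t)).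
- have -> : \sum_(x <- [seq (pairing (e Z) y, nrm y) | y <- t & nz y]) x.1 *: x.2
      = \sum_(y <- t | nz y) y.
    rewrite big_map -[RHS]big_filter; apply: eq_big_seq => y.
    by rewrite mem_filter => /andP [_ /t_state /hnrm [_ <-]].
  rewrite [RHS]PE -hsum [X in _ = _ *: X](bigID nz) /=.
  rewrite [X in _ = _ *: (_ + X)]big1_seq ?addr0 // => y /andP [/negPn/eqP y0 /t_state].
  by move=> /hnrm [_ ->]; rewrite y0 scale0r.
Qed.

Section ErrorSup.
Variables (O A : sys) (rho : tr I A) (N M : nat).
Variables (Enc : tr (spow A N) (spow O M)) (Dec : tr (spow O M) (spow A N)).

Lemma ereal_sup_Epurerrs_le :
  (ereal_sup (Epurerrs e rho Enc Dec) <= ereal_sup (Eerrs e rho Enc Dec))%E.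
Proof.
apply: ge_ereal_sup => _ [C [Om [d [_ [hdil [hd [href ->]]]]]]].
apply: ereal_sup_ubound; exists C, Om, [seq pPhi.1 *: pPhi.2 | pPhi <- d].
do 2!split=> //; rewrite big_map; apply: eq_big_seq => pPhi /hd [hp _].
by rewrite cerrZ.
Qed.

Lemma ereal_sup_Eerrs_le : normalized_state rho ->
  (ereal_sup (Eerrs e rho Enc Dec) <= ereal_sup (Epurerrs e rho Enc Dec))%E.
Proof.
move=> hrho; apply: ge_ereal_sup => _ [C [Psi [s [hdil [hs ->]]]]].
have [D hD] := choice_on [::] (@pure_decomposition (tens (spow A N) C)).
have s_state P : P \in s -> is_state P.
  by case: hs => [[u hsu] _] hP; exists (s ++ u); rewrite mem_cat hP.
pose d := flatten [seq [seq (pairing (e _) P * pPhi.1, pPhi.2) | pPhi <- D P] | P <- s].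
apply: (@le_trans _ _ (\sum_(pPhi <- d) ((pPhi.1)%:E * cerr e Enc Dec pPhi.2))%E).
  rewrite big_flatten /= big_map big_seq [leRHS]big_seq; apply: lee_sum => P hP.
  have [D_pure _ DE] := hD P (s_state P hP).
  have P_ge0 := pairing_ge0 de (s_state P hP).
  rewrite big_map; apply: (cerr_le_decomposition de Enc Dec P_ge0 _ DE).
  by move=> pPhi /D_pure [].
apply: ereal_sup_ubound; exists C, Psi, d.
have Psi_normalized := dilation_normalized de np (stpow_normalized N hrho) hdil.
do 2!split=> //; split.
  move=> x /flattenP [_ /mapP [P hP ->] /mapP [pPhi hpPhi ->]] /=.
  have [D_pure _ _] := hD P (s_state P hP).
  have [hp hPhi] := D_pure _ hpPhi.
  have P_ge0 := pairing_ge0 de (s_state P hP).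
  by split=> //; rewrite mulr_ge0.
split=> //.
have -> : [seq x.1 *: x.2 | x <- d] = flatten [seq [seq pairing (e _) P *: y |
    y <- [seq x.1 *: x.2 | x <- D P]] | P <- s].
  rewrite map_flatten -map_comp; congr flatten; apply: eq_map => P /=.
  by rewrite -!map_comp; apply: eq_map => x /=; rewrite scalerA.
apply: (refinement_flatten de sc hs) => [P /(hD P) [] //|P /s_state /(hD P) []].
by rewrite big_map.
Qed.

Lemma ereal_sup_Eerrs_Epurerrs : normalized_state rho ->
  ereal_sup (Eerrs e rho Enc Dec) = ereal_sup (Epurerrs e rho Enc Dec).
Proof.
by move=> hrho; apply/le_anti; rewrite ereal_sup_Eerrs_le // ereal_sup_Epurerrs_le.
Qed.

End ErrorSup.

Lemma Eset_Epurset (O A : sys) (rho : tr I A) N M eps : normalized_state rho ->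
  @Eset R T e O A rho N M eps = @Epurset R T e O A rho N M eps.
Proof.
move=> hrho; apply/funext => ED.
by rewrite /Eset /Epurset /= ereal_sup_Eerrs_Epurerrs.
Qed.

End Compression.

Theorem mainTheorem3 (R : realType) (T : OPT R) (e : forall A : sys T, tr T A (I T))
  (O : sys T) (A : sys T) (rho : tr T (I T) A) :
  deterministic_effect e ->
  strongly_causal T ->
  normalization_property e ->
  digitalizable O ->
  pure_refinable T ->
  normalized_state rho ->
  info_content e O rho = info_content_pur e O rho.
Proof.
move=> de sc np _ pr hrho.
rewrite /info_content /info_content_pur.
suff -> : @Eset R T e O A rho = @Epurset R T e O A rho by [].
do 2!apply: functional_extensionality_dep => ?; apply/funext => eps.
exact: Eset_Epurset.
Qed.
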